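(* In the model described in the context, if all high-level operations are totally ordered and $\tau\ge 3f+1$, then Algorithm 1 with threshold $t=f+1$ satisfies both completeness and strong accuracy.
   Context: Model. An asynchronous system has client processes (writers, readers, auditors) and $n$ storage objects $o_1,\dots,o_n$. Each $o_k$ is a linearisable loggable read/write register with a log $L_k$ (initially empty). Its rw-write($b$) stores a block; rw-read() returns the current block and appends $\langle p_r,\mathit{label}(b)\rangle$ to $L_k$, where $p_r$ is the reader and $\mathit{label}(b)$ identifies the value from which $b$ was derived; rw-getLog() returns $L_k$. A register over values $\mathbb{V}$ is emulated by information dispersal. An a-write($v$) encodes $v$ into $b_{v_1},\dots,b_{v_n}$ with $b_{v_k}$ sent to $o_k$. Any $\tau$ distinct blocks of $v$ recover $v$, and fewer do not. Total order: all high-level operations are serialised via total order broadcast and executed sequentially, so objects hold blocks of a single value. Faults. Writers and auditors can only crash. Faulty readers may crash or contact a subset of objects. At most $f$ objects are faulty; a faulty object may crash, omit its block, omit log records from auditors, and report records of nonexistent reads. Providing set $P_{p_r,v}$: the set of objects that received a write of $b_{v_k}$ and responded $b_{v_k}$ to a read of $p_r$. The value $v$ is effectively read by $p_r$ iff $|P_{p_r,v}|\ge\tau$. Algorithm 1 (a-audit with threshold $t$): 1. Invoke rw-getLog on all $n$ objects in parallel, and wait for responses from at least $n-f$; let $L[k]$ be the log received from $o_k$. 2. For every record $\langle p_r,\mathit{label}(v)\rangle$ in some $L[k]$, let $\mathcal{E}_{p_r,v}=\{k:\langle p_r,\mathit{label}(v)\rangle\in L[k]\}$, and add it to $E_A$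 iff $|\mathcal{E}_{p_r,v}|\ge t$. 3. Return $E_A$. Completeness: $|P_{p_r,v}|\ge\tau$ before the audit implies $\mathcal{E}_{p_r,v}\in E_A$. Strong accuracy: for every correct reader $p_r$ and every value $v$, $|P_{p_r,v}|<\tau$ before the audit implies $\mathcal{E}_{p_r,v}\notin E_A$. *)

(* Abstract model of the auditable information-dispersal
   register of the paper, with all high-level operations totally ordered
   (executed sequentially, each operation atomically w.r.t. the objects). *)
From Stdlib Require Import List.
From mathcomp Require Import all_boot.
Set Implicit Arguments. Unset Strict Implicit. Unset Printing Implicit Defensive.

Inductive hop (Reader V : Type) := AWrite of V | ARead of Reader.
Arguments AWrite {Reader V}.
Arguments ARead {Reader V}.

(* One high-level operation executed in the total order.
   - s_reach : the objects o_k at which the low-level operation took effect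
       (for a-write(v): o_k stored b_{v_k}; for a read: o_k executed rw-read)
   - s_resp  : for a read, the objects that returned their current block
       to the reader (a faulty object may omit it). *)
Record step (n : nat) (Reader V : Type) := Step {
  s_op : hop Reader V;
  s_reach : {set 'I_n};
  s_resp : {set 'I_n} }.

Definition exec (n : nat) (Reader V : Type) := seq (step n Reader V).

Section Model.
Variables (n : nat) (Reader V : eqType).
Implicit Types (e : exec n Reader V) (k : 'I_n) (p : Reader) (v : V).

Definition indexed e : seq (nat * step n Reader V) := zip (iota 0 (size e)) e.

(* Value from which the block held by o_k just before step i was derived
   (None = initial, no block written yet). *)
Definition held e k (i : nat) : option V :=
  foldl (fun acc s => if s_op s is AWrite v then
                        (if k \in s_reach s then Some v else acc)
                      else acc) None (take i e).

(* The (true) log L_k of object o_k after e: each rw-read executed on o_k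
   appends <p_r, label(b)> where b is its current block. *)
Definition honest_log e k : seq (Reader * V) :=
  flatten [seq (if s_op ix.2 is ARead p then
                  (if k \in s_reach ix.2 then
                     (if held e k ix.1 is Some v then [:: (p, v)] else [::])
                   else [::])
                else [::]) | ix <- indexed e].

Definition providing e p v : {set 'I_n} :=
  [set k | has (fun ix => if s_op ix.2 is ARead q then
                  [&& q == p, k \in s_reach ix.2, k \in s_resp ix.2
                    & held e k ix.1 == Some v]
                else false) (indexed e)].

Definition well_formed (F : {set 'I_n}) (correctR : pred Reader) e : Prop :=
  [/\ (* total order: the (correct) objects hold blocks of a single value *)
      forall i k1 k2, k1 \notin F -> k2 \notin F -> held e k1 i = held e k2 i,
      forall s p, In s e -> s_op s = ARead p ->
        forall k, k \notin F -> k \in s_reach s -> k \in s_resp s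
    &
      forall s p, In s e -> s_op s = ARead p -> correctR p ->
        forall k, k \notin F -> k \in s_reach s].

(* Responses to the audit's rw-getLog: R = objects that answered (at least
   n - f), L k = log received from o_k. Correct objects return their true
   log; faulty objects may return anything (omit or invent records). *)
Definition valid_audit (f : nat) (F : {set 'I_n}) e
    (R : {set 'I_n}) (L : 'I_n -> seq (Reader * V)) : Prop :=
  n - f <= #|R| /\ forall k, k \in R -> k \notin F -> L k = honest_log e k.

Definition evidence (R : {set 'I_n}) (L : 'I_n -> seq (Reader * V)) p v
  : {set 'I_n} := [set k in R | (p, v) \in L k].

(* \mathcal{E}_{p,v} \in E_A for Algorithm 1 with threshold t: the record
   occurs in some L[k] and |\mathcal{E}_{p,v}| >= t. *)
Definition audit_reports (t : nat) (R : {set 'I_n})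
    (L : 'I_n -> seq (Reader * V)) p v : bool :=
  (0 < #|evidence R L p v|) && (t <= #|evidence R L p v|).

Definition completeness (tau t : nat) e R L : Prop :=
  forall p v, tau <= #|providing e p v| -> audit_reports t R L p v.

Definition strong_accuracy (tau t : nat) (correctR : pred Reader) e R L
  : Prop :=
  forall p v, correctR p -> #|providing e p v| < tau ->
    ~~ audit_reports t R L p v.

End Model.

From mathcomp Require Import all_boot zify.
From Stdlib Require List.

Set Implicit Arguments.
Unset Strict Implicit.
Unset Printing Implicit Defensive.

(* Completeness: of the tau objects providing v to p, at most f are faulty and
   at most f did not answer the audit, so at least tau - 2f >= f + 1 correct
   objects of R report the record, the log of a correct object being its true
   log.  Strong accuracy: if one correct object logged <p, v>, then p read while
   every correct object held a block of v (total order), and a correct reader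
   contacts and is answered by every correct object; so all n - f >= tau
   correct objects would provide v to p.  Hence below tau only faulty objects
   report the record, at most f < f + 1 of them. *)

Lemma card_le_setI_setD (T : finType) (A B C : {set T}) :
  #|A| <= #|A :&: B :\: C| + #|~: B| + #|C|.
Proof.
rewrite -(cardsID B A) -(cardsID C (A :&: B)).
have := subset_leq_card (subsetIr (A :&: B) C).
have := subset_leq_card (subsetIr A (~: B)); rewrite -setDE; lia.
Qed.

Section Logs.
Variables (n : nat) (Reader V : eqType).
Implicit Types (e : exec n Reader V) (k : 'I_n) (p : Reader) (v : V).

Definition logged_read e k p v (ix : nat * step n Reader V) : bool :=
  if s_op ix.2 is ARead q then
    [&& q == p, k \in s_reach ix.2 & held e k ix.1 == Some v]
  else false.

Lemma mem_honest_log e k p v :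
  ((p, v) \in honest_log e k) = has (logged_read e k p v) (indexed e).
Proof.
rewrite /honest_log; elim: (indexed e) => //= -[i s] ixs IH.
rewrite mem_cat IH /logged_read /=; congr (_ || _).
case: (s_op s) => // q; case: (k \in s_reach s); last by rewrite andbF.
case: (held e k i) => [w|] /=; last by rewrite andbF.
by rewrite mem_seq1 xpair_eqE (eq_sym p) (eq_sym v).
Qed.

Lemma providing_honest_log e k p v :
  k \in providing e p v -> (p, v) \in honest_log e k.
Proof.
rewrite inE mem_honest_log; apply: sub_has => -[i s]; rewrite /logged_read /=.
by case: (s_op s) => // q /and4P [? ? _ ?]; apply/and3P.
Qed.

Lemma In_indexed e i s : List.In (i, s) (indexed e) -> List.In s e.
Proof.
have unzip_indexed : List.map snd (indexed e) = e.
  by apply: unzip2_zip; rewrite size_iota.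
by move=> /(List.in_map snd); rewrite unzip_indexed.
Qed.

(* [has] is convertible to [List.existsb], whose [existsb_exists] links it to
   [List.In], the membership used by [well_formed]. *)
Lemma has_indexed_In e (a : pred (nat * step n Reader V)) :
  has a (indexed e) -> exists i s, List.In (i, s) (indexed e) /\ a (i, s).
Proof. by move=> /List.existsb_exists [[i s] ?]; exists i, s. Qed.

Lemma honest_record_providing F correctR e k p v :
  well_formed F correctR e -> k \notin F -> correctR p ->
  (p, v) \in honest_log e k -> ~: F \subset providing e p v.
Proof.
case=> single_value responds contacts kF cp.
rewrite mem_honest_log => /has_indexed_In [i [s [ixe]]].
rewrite /logged_read /=; case op: (s_op s) => [|q] //.
case/and3P => /eqP qp _ /eqP held_v; subst q; have se := In_indexed ixe.
apply/subsetP => k'; rewrite !inE => k'F.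
apply/List.existsb_exists; exists (i, s); split=> //=; rewrite op eqxx /=.
have reach := contacts s p se op cp k' k'F.
rewrite reach (responds s p se op k' k'F reach).
by rewrite (single_value i k' k k'F kF) held_v eqxx.
Qed.

Lemma correct_providing_sub_evidence f F e R L p v :
  valid_audit f F e R L ->
  providing e p v :&: R :\: F \subset evidence R L p v.
Proof.
case=> _ true_logs; apply/subsetP => k.
rewrite in_setD in_setI => /and3P [kF kP kR].
by rewrite inE kR true_logs //; apply: providing_honest_log.
Qed.

Lemma evidence_sub_faulty f F correctR e R L p v :
  well_formed F correctR e -> valid_audit f F e R L -> correctR p ->
  #|providing e p v| < #|~: F| -> evidence R L p v \subset F.
Proof.
move=> wf [_ true_logs] cp small_P; apply/subsetP => k; rewrite inE.
case/andP=> kR record; apply: contraTT small_P => kF; rewrite -leqNgt.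
by apply/subset_leq_card/(honest_record_providing wf kF cp); rewrite -true_logs.
Qed.

End Logs.

Theorem theorem5 (n f tau : nat) (Reader V : eqType)
    (F : {set 'I_n}) (correctR : pred Reader) (e : exec n Reader V)
    (R : {set 'I_n}) (L : 'I_n -> seq (Reader * V)) :
  #|F| <= f ->
  3 * f + 1 <= tau ->
  tau + f <= n ->
  well_formed F correctR e ->
  valid_audit f F e R L ->
  completeness tau (f + 1) e R L /\
  strong_accuracy tau (f + 1) correctR e R L.
Proof.
move=> card_F f_tau tau_n wf audit.
have [card_R _] := audit.
have := cardsC R; have := cardsC F; rewrite card_ord => card_RC card_FC.
split=> p v.
- move=> big_P; have := card_le_setI_setD (providing e p v) R F.
  have := subset_leq_card (correct_providing_sub_evidence p v audit).
  by move=> *; apply/andP; split; lia.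
- move=> cp small_P.
  have /subset_leq_card : evidence R L p v \subset F.
    by apply: (evidence_sub_faulty wf audit cp); lia.
  rewrite /audit_reports; lia.
Qed.
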